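(* Let $D$ be a long knot diagram, possibly with null vertices, and let $a\neq b$ be two points on edges of $D$, away from crossings and null vertices. Let $D'$ be obtained from $D$ by inserting a new null vertex at a point of an edge different from $a$ and $b$. Then $\tilde g_{ab}$ computed in $D'$ equals $\tilde g_{ab}$ computed in $D$.
   Context: A long knot diagram is a planar diagram of a long oriented knot. It may contain null vertices: marked points on the knot (away from crossings) whose only role is to cut edges. Edges are the arcs obtained by cutting the knot at every crossing (on both strands) and at every null vertex; they are labelled by distinct labels, and for a label $\ell$ we write $\ell^+$ for the label of the next edge along the orientation. A crossing is $c=(s,i,j)$ with sign $s=\pm1$, incoming over-edge $i$ and incoming under-edge $j$ (outgoing over-edge $i^+$, outgoing under-edge $j^+$). A null vertex with incoming edge $j$ and outgoing edge $k$ is recorded by the pair $(j,k)$. Let $A=I+\sum_cA_c+\sum_{\mathrm{nv}}A_{\mathrm{nv}}$ (square matrix indexed by edge labels over $\mathbb{Z}[T^{\pm1}]$), where for a crossing $c=(s,i,j)$, $A_c$ is zero except for entry $-T^s$ at $(i,i^+)$, entry $T^s-1$ at $(i,j^+)$ and entry $-1$ at $(j,j^+)$; and for a null vertex $(j,k)$, $A_{\mathrm{nv}}$ is zero except for entry $-1$ at $(j,k)$. Let $G=(g_{\alpha\beta})=A^{-1}$ (over $\mathbb{Q}(T)$). For two distinct points $a,b$ on edges $\alpha,\beta$ (away from crossings and null vertices), define $\tilde g_{ab}=g_{\alpha\beta}$ if $\alpha\neq\beta$ or if $\alpha=\beta$ and $a$ precedes $b$ along the orientation of that edge, and $\tilde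 g_{ab}=g_{\alpha\beta}-1$ if $\alpha=\beta$ and $a$ comes after $b$. *)

From HB Require Import structures.
From mathcomp Require Import all_boot all_order all_algebra.
Set Implicit Arguments. Unset Strict Implicit. Unset Printing Implicit Defensive.
Import Order.TTheory GRing.Theory Num.Theory.
Local Open Scope ring_scope.

Definition QT : fieldType := {fraction {poly rat}}.
Definition T : QT := tofrac ('X : {poly rat}).

(* The long knot is parametrized by the (rational) line, oriented by the
   usual order.  A crossing is recorded by its sign and by the two points of
   the line where the over-strand and the under-strand pass through it. *)
Record crossing := Crossing { csign : int; cover : rat; cunder : rat }.

Record diagram := Diagram { crossings : seq crossing; nulls : seq rat }.

Definition cutpts (D : diagram) : seq rat :=
  [seq cover c | c <- crossings D] ++ [seq cunder c | c <- crossings D] ++ nulls D.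

Definition wf_diagram (D : diagram) : Prop :=
  uniq (cutpts D) /\ all (fun c => (csign c == 1) || (csign c == -1)) (crossings D).

(* Number of edges, edges labelled 0..nedges-1 in the order along the knot;
   the successor of label l is l+1. *)
Definition nedges (D : diagram) : nat := (size (cutpts D)).+1.

(* The edge containing point x (x not a cut point): number of cut points before x.
   For a cut point x, this is the label of the incoming edge at x. *)
Definition edge (D : diagram) (x : rat) : nat := count (fun v => v < x) (cutpts D).

Definition crossing_entry (D : diagram) (c : crossing) (r k : nat) : QT :=
  let s := csign c in
  let i := edge D (cover c) in
  let j := edge D (cunder c) in
  (if (r == i) && (k == i.+1) then - T ^ s else 0)
  + (if (r == i) && (k == j.+1) then T ^ s - 1 else 0)
  + (if (r == j) && (k == j.+1) then -1 else 0).

Definition null_entry (D : diagram) (p : rat) (r k : nat) : QT :=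
  if (r == edge D p) && (k == (edge D p).+1) then -1 else 0.

Definition Amx (D : diagram) : 'M[QT]_(nedges D) :=
  \matrix_(r, k) ((r == k :> nat)%:R
                  + \sum_(c <- crossings D) crossing_entry D c r k
                  + \sum_(p <- nulls D) null_entry D p r k).

Definition Gmx (D : diagram) : 'M[QT]_(nedges D) := invmx (Amx D).

Definition gtilde (D : diagram) (a b : rat) : QT :=
  Gmx D (inord (edge D a)) (inord (edge D b))
  - (if (edge D a == edge D b) && (b < a) then 1 else 0).

Definition insert_null (D : diagram) (p : rat) : diagram :=
  Diagram (crossings D) (p :: nulls D).

(* Write the matrix A of a diagram as the identity plus one weighted "arc"
   (w, i, j), i.e. an entry w at (i, j^+), for each of the three nonzero
   entries of a crossing and for each null vertex.  Inserting a null vertex on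
   edge e splits e into e and e^+ = e + 1: every label above e is bumped by one
   and a new arc (-1, e, e) appears.  A direct row-by-row computation shows that
   A' H = I for H(x, y) = G(x', y') - [x = e + 1 and y = e], where x' is x with
   the split undone (unbump), so G' = H.  For points a, b away from the new
   vertex, the edges of D are recovered by unbump, and the correction term of H
   is nonzero exactly when a and b lie on one edge of D with b < p < a, which is
   precisely when the same-edge test in g~ changes from D to D'.
   That A is invertible at all holds because T A is a polynomial matrix which is
   upper unitriangular at T = 1: the only arcs that can land on or below the
   diagonal have weight T^s - 1 with s = +-1, which vanishes at T = 1. *)

From Pilot Require Import Defs.
From HB Require Import structures.
From mathcomp Require Import all_boot all_order all_algebra zify.
Import Order.TTheory GRing.Theory Num.Theory.
Set Implicit Arguments. Unset Strict Implicit. Unset Printing Implicit Defensive.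
Local Open Scope ring_scope.

(* [Arc w i j] stands for the entry [w] at position [(i, j.+1)]. *)
Record arc (R : Type) := Arc { weight : R; src : nat; dst : nat }.

Definition arc_tuple R (t : arc R) := (weight t, src t, dst t).
Definition tuple_arc R (x : R * nat * nat) := Arc x.1.1 x.1.2 x.2.
Lemma arc_tupleK R : cancel (@arc_tuple R) (@tuple_arc R). Proof. by case. Qed.
HB.instance Definition _ (R : eqType) :=
  Equality.copy (arc R) (can_type (@arc_tupleK R)).

Definition relabel R (f : nat -> nat) (t : arc R) : arc R :=
  Arc (weight t) (f (src t)) (f (dst t)).

Section ArcMatrix.

Variable R : pzRingType.
Implicit Types (L : seq (arc R)) (m n e : nat).

Definition arc_coef (t : arc R) (r k : nat) : R :=
  if (r == src t) && (k == (dst t).+1) then weight t else 0.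

Definition arc_entry L (r k : nat) : R := (r == k)%:R + \sum_(t <- L) arc_coef t r k.

Definition arc_mx m L : 'M[R]_m := \matrix_(r, k) arc_entry L r k.

Lemma arc_entry_cons t L r k : arc_entry (t :: L) r k = arc_coef t r k + arc_entry L r k.
Proof. by rewrite /arc_entry big_cons addrCA. Qed.

Lemma perm_arc_mx m L1 L2 : perm_eq L1 L2 -> arc_mx m L1 = arc_mx m L2.
Proof. by move=> eqL; apply/matrixP => r k; rewrite !mxE /arc_entry (perm_big _ eqL). Qed.

Lemma sum_ord_delta m (F : nat -> R) r : (r < m)%N ->
  \sum_(k < m) (if k == r :> nat then F k else 0) = F r.
Proof. by move=> lt_r; rewrite -big_mkcond big_ord1_eq lt_r. Qed.

Lemma arc_row_expand m L r (F : nat -> R) :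
  (r < m)%N -> {in L, forall t, (dst t).+1 < m}%N ->
  \sum_(k < m) arc_entry L r k * F k =
    F r + \sum_(t <- L) (if r == src t then weight t * F (dst t).+1 else 0).
Proof.
move=> lt_r_m ltL; under eq_bigr do rewrite mulrDl mulr_suml.
rewrite big_split /= exchange_big /=; congr (_ + _).
  rewrite -[RHS](sum_ord_delta F lt_r_m); apply: eq_bigr => k _.
  by rewrite eq_sym; case: eqP; rewrite ?mul1r ?mul0r.
apply: eq_big_seq => t /ltL lt_t.
rewrite -(sum_ord_delta (fun k => if r == src t then weight t * F k else 0) lt_t).
apply: eq_bigr => k _; rewrite /arc_coef andbC.
by case: (k == _ :> nat); case: (r == _); rewrite ?mul0r.
Qed.

Definition insert_null_arcs e L : seq (arc R) := Arc (-1) e e :: map (relabel (bump e)) L.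

Definition insert_null_inv e (G : nat -> nat -> R) (x y : nat) : R :=
  G (unbump e x) (unbump e y) - ((x == e.+1) && (y == e))%:R.

Section InsertNull.

Variables (n e : nat) (L : seq (arc R)) (G : nat -> nat -> R).
Hypotheses (lt_e_n : (e < n)%N) (ltL : {in L, forall t, (dst t).+1 < n}%N).
Hypothesis G_inv : forall r b, (r < n)%N -> (b < n)%N ->
  \sum_(k < n) arc_entry L r k * G k b = (r == b)%:R.

Lemma insert_null_inv_bump v b :
  insert_null_inv e G (bump e v).+1 b = G v.+1 (unbump e b).
Proof.
rewrite /insert_null_inv eqSS [bump _ _ == _]eq_sym (negbTE (neq_bump _ _)) subr0.
by congr G; rewrite /bump /unbump; lia.
Qed.

Lemma insert_null_arcs_mul_inv r b : (r < n.+1)%N -> (b < n.+1)%N ->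
  \sum_(k < n.+1) arc_entry (insert_null_arcs e L) r k * insert_null_inv e G k b =
    (r == b)%:R.
Proof.
move=> lt_r lt_b; rewrite (arc_row_expand (insert_null_inv e G ^~ b)) //; last first.
  move=> t /predU1P [-> | /mapP [u /ltL + ->]] /=; first lia.
  by move: (dst u) => v; rewrite /bump; lia.
rewrite big_cons big_map /=; under eq_big_seq do rewrite insert_null_inv_bump.
have [->|ne_r_e] := eqVneq r e.
  rewrite big1 ?addr0 => [|t _]; last by rewrite /= (negbTE (neq_bump _ _)).
  rewrite /insert_null_inv /unbump ltnn subn0 ltnSn subn1 /=.
  rewrite (_ : e == e.+1 = false); last by lia.
  by rewrite subr0 mulN1r subKr eqxx eq_sym.
have bumpE u : (r == bump e u) = (unbump e r == u).
  have r_bump : bump e (unbump e r) = r by rewrite unbumpK // inE.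
  by rewrite -{1}r_bump (inj_eq (can_inj (bumpK e))).
under eq_big_seq do rewrite /= bumpE.
have lt_ur : (unbump e r < n)%N by rewrite /unbump; lia.
have lt_ub : (unbump e b < n)%N by rewrite /unbump; lia.
have := arc_row_expand (G^~ (unbump e b)) lt_ur ltL; rewrite G_inv // => rowE.
rewrite addrC in rowE; move/eqP: rowE; rewrite -subr_eq => /eqP <-.
rewrite /insert_null_inv add0r addrC addrA subrK.
have -> : (unbump e r == unbump e b) = (r == b) || ((r == e.+1) && (b == e)).
  by move: ne_r_e; rewrite /unbump; lia.
have [->|_] /= := eqVneq r b; last exact: subrr.
by rewrite (_ : (b == e.+1) && (b == e) = false) ?subr0 //; lia.
Qed.

End InsertNull.

End ArcMatrix.

Lemma invmx_insert_null_arcs (R : comUnitRingType) n m e (L : seq (arc R)) :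
  m = n.+2 -> (e <= n)%N -> {in L, forall t, dst t < n}%N ->
  arc_mx n.+1 L \in unitmx ->
  invmx (arc_mx m (insert_null_arcs e L)) =
    \matrix_(x, y)
      insert_null_inv e (fun i j => invmx (arc_mx n.+1 L) (inord i) (inord j)) x y.
Proof.
move=> -> le_e_n ltL unitA.
pose G i j : R := invmx (arc_mx n.+1 L) (inord i) (inord j).
have G_inv r b : (r < n.+1)%N -> (b < n.+1)%N ->
    \sum_(k < n.+1) arc_entry L r k * G k b = (r == b)%:R.
  move=> lt_r lt_b.
  have := congr1 (fun M : 'M_n.+1 => M (inord r) (inord b)) (mulmxV unitA).
  rewrite !mxE -val_eqE /= !inordK // => <-.
  by apply: eq_bigr => k _; rewrite mxE inordK // /G inord_val.
have inv_right : arc_mx n.+2 (insert_null_arcs e L) *m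
    \matrix_(x, y) insert_null_inv e G x y = 1%:M.
  apply/matrixP => r b; rewrite mxE; under eq_bigr do rewrite !mxE.
  rewrite mxE.
  exact: (insert_null_arcs_mul_inv (n := n.+1) le_e_n ltL G_inv (ltn_ord r) (ltn_ord b)).
have [unitA' _] := mulmx1_unit inv_right.
by rewrite -[invmx _]mulmx1 -inv_right mulKmx.
Qed.

Lemma T_neq0 : T != 0.
Proof. by rewrite tofrac_eq0 polyX_eq0. Qed.

Lemma mulT_exprz (s : int) : -1 <= s -> exists k : nat, T * T ^ s = tofrac ('X ^+ k).
Proof.
move=> ge_s; have [k sk] : exists k : nat, 1 + s = k.
  by exists (absz (1 + s)); rewrite gez0_abs //; lia.
by exists k; rewrite -[X in X * _]expr1z -exprzDr ?unitfE ?T_neq0 // sk rmorphXn.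
Qed.

Definition unitri_at1 (t : arc QT) : Prop :=
  exists q : {poly rat}, tofrac q = T * weight t /\ (src t != dst t -> root q 1).

Lemma arc_entry_poly (L : seq (arc QT)) r k : {in L, forall t, unitri_at1 t} ->
  exists q : {poly rat},
    tofrac q = T * arc_entry L r k /\ ((k <= r)%N -> q.[1] = (r == k)%:R).
Proof.
elim: L => [_ | t L IH HL].
  exists ((r == k)%:R * 'X); rewrite /arc_entry big_nil addr0 rmorphM rmorph_nat mulrC.
  by split=> // _; rewrite hornerMX hornerMn hornerC mulr1.
have [qL [qLE qL1]] : exists q : {poly rat},
    tofrac q = T * arc_entry L r k /\ ((k <= r)%N -> q.[1] = (r == k)%:R).
  by apply: IH => s sL; apply: HL; rewrite inE sL orbT.
have [qt [qtE qt1]] := HL t (mem_head t L).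
exists ((if (r == src t) && (k == (dst t).+1) then qt else 0) + qL).
rewrite arc_entry_cons mulrDr /arc_coef; split.
  rewrite -qLE rmorphD; congr (_ + _).
  by case: ifP => _; rewrite ?qtE ?rmorph0 ?mulr0.
move=> le_kr; rewrite hornerD qL1 //; case: ifP => [/andP[/eqP r_src /eqP k_dst] | _].
  by rewrite (rootP (qt1 _)) ?add0r //; apply/eqP; lia.
by rewrite horner0 add0r.
Qed.

Lemma arc_mx_unit n (L : seq (arc QT)) :
  {in L, forall t, unitri_at1 t} -> arc_mx n L \in unitmx.
Proof.
move=> HL; have /fin_all_exists [q qE] (ij : 'I_n * 'I_n) : exists q : {poly rat},
    tofrac q = T * arc_entry L ij.1 ij.2 /\
    ((ij.2 <= ij.1)%N -> q.[1] = (ij.1 == ij.2)%:R).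
  exact: arc_entry_poly.
pose B := \matrix_(i, j) q (i, j).
have BE : map_mx (fun p => tofrac p) B = T *: arc_mx n L.
  by apply/matrixP => i j; rewrite !mxE (qE (i, j)).1.
have B1 : \det (map_mx (horner_eval 1) B) = 1.
  rewrite -det_tr det_trig; last first.
    apply/is_trig_mxP => i j lt_ij.
    rewrite !mxE horner_evalE (qE (j, i)).2 /= ?(ltnW lt_ij) //.
    by rewrite -val_eqE /= gtn_eqF.
  by apply: big1 => i _; rewrite !mxE horner_evalE (qE (i, i)).2 /= ?eqxx.
rewrite unitmxE unitfE; apply/eqP => detA0.
have /eqP : tofrac (\det B) = 0 by rewrite -det_map_mx BE detZ detA0 mulr0.
rewrite tofrac_eq0 => /eqP detB0.
by move: B1; rewrite det_map_mx detB0 rmorph0 => /eqP; rewrite eq_sym oner_eq0.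
Qed.

Definition crossing_tuple (c : crossing) := (csign c, Defs.cover c, cunder c).
Definition tuple_crossing (x : int * rat * rat) := Crossing x.1.1 x.1.2 x.2.
Lemma crossing_tupleK : cancel crossing_tuple tuple_crossing. Proof. by case. Qed.
HB.instance Definition _ := Equality.copy crossing (can_type crossing_tupleK).

Definition crossing_arcs (l : rat -> nat) (c : crossing) : seq (arc QT) :=
  [:: Arc (- T ^ csign c) (l (Defs.cover c)) (l (Defs.cover c));
      Arc (T ^ csign c - 1) (l (Defs.cover c)) (l (cunder c));
      Arc (-1) (l (cunder c)) (l (cunder c))].

Definition null_arc (l : rat -> nat) (x : rat) : arc QT := Arc (-1) (l x) (l x).

Definition diagram_arcs (l : rat -> nat) (D : diagram) : seq (arc QT) :=
  flatten [seq crossing_arcs l c | c <- crossings D] ++ [seq null_arc l x | x <- nulls D].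

Lemma AmxE D : Amx D = arc_mx (nedges D) (diagram_arcs (edge D) D).
Proof.
apply/matrixP => r k; rewrite !mxE /arc_entry big_cat big_flatten /= !big_map -!addrA.
congr (_ + (_ + _)); apply: eq_bigr => c _.
by rewrite !big_cons big_nil addr0 /crossing_entry !addrA.
Qed.

Lemma diagram_arcs_insert_null l D p :
  perm_eq (diagram_arcs l (insert_null D p)) (null_arc l p :: diagram_arcs l D).
Proof. by apply/permPl; exact: (perm_catCA _ [:: _]). Qed.

Lemma diagram_arcs_relabel f l D :
  diagram_arcs (f \o l) D = map (relabel f) (diagram_arcs l D).
Proof. by rewrite /diagram_arcs map_cat map_flatten -!map_comp. Qed.

Lemma eq_in_diagram_arcs l1 l2 D :
  {in cutpts D, l1 =1 l2} -> diagram_arcs l1 D = diagram_arcs l2 D.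
Proof.
move=> eql; rewrite /diagram_arcs; congr (flatten _ ++ _); apply/eq_in_map.
  by move=> c cD; rewrite /crossing_arcs !eql // /cutpts !mem_cat (map_f _ cD) ?orbT.
by move=> x xD; rewrite /null_arc eql // /cutpts !mem_cat xD !orbT.
Qed.

Lemma diagram_arcs_dst l D : {in diagram_arcs l D, forall t, dst t \in map l (cutpts D)}.
Proof.
move=> t; rewrite mem_cat => /orP [/flatten_mapP [c cD] | /mapP [x xD ->]].
  rewrite !inE => /or3P [] /eqP -> /=; apply: map_f;
    by rewrite /cutpts !mem_cat (map_f _ cD) ?orbT.
by apply: map_f; rewrite /cutpts !mem_cat xD !orbT.
Qed.

Lemma null_arc_unitri l x : unitri_at1 (null_arc l x).
Proof. by exists (- 'X); rewrite rmorphN mulrN1 eqxx. Qed.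

Lemma crossing_arcs_unitri l c :
  -1 <= csign c -> {in crossing_arcs l c, forall t, unitri_at1 t}.
Proof.
move=> /mulT_exprz [k Tk] t; rewrite !inE => /or3P [] /eqP ->.
- by exists (- 'X ^+ k); rewrite rmorphN mulrN Tk eqxx.
- exists ('X ^+ k - 'X); split=> [|_]; first by rewrite rmorphB mulrBr Tk mulr1.
  by rewrite rootE !hornerE expr1n subrr.
- exact: null_arc_unitri.
Qed.

Lemma diagram_arcs_unitri l D :
  wf_diagram D -> {in diagram_arcs l D, forall t, unitri_at1 t}.
Proof.
case=> _ /allP signs t; rewrite mem_cat => /orP [/flatten_mapP [c cD] | /mapP [x _ ->]].
  by apply: crossing_arcs_unitri; case/orP: (signs c cD) => /eqP ->.
exact: null_arc_unitri.
Qed.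

Lemma Amx_unit D : wf_diagram D -> Amx D \in unitmx.
Proof. by move=> wfD; rewrite AmxE; apply/arc_mx_unit/diagram_arcs_unitri. Qed.

Lemma edge_insert_null D p x : edge (insert_null D p) x = (edge D x + (p < x)%R)%N.
Proof. by rewrite /edge /cutpts /= !count_cat /=; lia. Qed.

Lemma leq_edge D x y : x <= y -> (edge D x <= edge D y)%N.
Proof. by move=> le_xy; apply: sub_count => v /= /lt_le_trans; apply. Qed.

Lemma edge_cut_lt D x y : x \in cutpts D -> x < y -> (edge D x < edge D y)%N.
Proof.
rewrite /edge => + lt_xy; elim: (cutpts D) => //= v s IH /predU1P [<- | /IH].
  by rewrite ltxx lt_xy ltnS; apply: sub_count => w /= /lt_trans; apply.
by case: (ltP v x) => [/lt_trans/(_ lt_xy) -> | _] /=; lia.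
Qed.

Lemma edge_cut_lt_size D x : x \in cutpts D -> (edge D x < size (cutpts D))%N.
Proof.
move=> xD; rewrite /edge -(count_predC (< x)) -addn1 leq_add2l -has_count.
by apply/hasP; exists x; rewrite //= ltxx.
Qed.

Lemma edge_insert_null_cut D p : p \notin cutpts D ->
  {in cutpts D, edge (insert_null D p) =1 bump (edge D p) \o edge D}.
Proof.
move=> pD x xD /=; rewrite edge_insert_null /bump addnC; congr (nat_of_bool _ + _)%N.
have [lt_px | lt_xp | eq_px] := ltgtP p x; last by rewrite eq_px xD in pD.
  by rewrite leq_edge ?ltW.
by apply/esym/negbTE; rewrite -ltnNge edge_cut_lt.
Qed.

Lemma unbump_edge_insert_null D p x : x != p ->
  unbump (edge D p) (edge (insert_null D p) x) = edge D x.
Proof.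
move=> ne_xp; rewrite edge_insert_null /unbump.
have [lt_px | lt_xp | eq_px] := ltgtP p x; last by rewrite eq_px eqxx in ne_xp.
  by have := leq_edge D (ltW lt_px); lia.
by have := leq_edge D (ltW lt_xp); lia.
Qed.

Lemma Gmx_insert_null D p : wf_diagram D -> p \notin cutpts D ->
  Gmx (insert_null D p) =
    \matrix_(x, y) insert_null_inv (edge D p) (fun i j => Gmx D (inord i) (inord j)) x y.
Proof.
move=> wfD pD; set e := edge D p.
have arcsE : perm_eq (diagram_arcs (edge (insert_null D p)) (insert_null D p))
                     (insert_null_arcs e (diagram_arcs (edge D) D)).
  have pE : edge (insert_null D p) p = e by rewrite edge_insert_null ltxx addn0.
  rewrite /insert_null_arcs -diagram_arcs_relabel.
  rewrite -(eq_in_diagram_arcs (edge_insert_null_cut pD)) -pE.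
  exact: diagram_arcs_insert_null.
rewrite /Gmx AmxE (perm_arc_mx _ arcsE) (invmx_insert_null_arcs (n := size (cutpts D))).
- by rewrite -AmxE.
- by rewrite /nedges /cutpts /= !size_cat /= !addnS.
- exact: count_size.
- by move=> t /diagram_arcs_dst /mapP [x xD ->]; apply: edge_cut_lt_size.
- by rewrite -AmxE Amx_unit.
Qed.

Lemma edge_insert_null_correction D p a b : a != p -> b != p ->
  (((edge (insert_null D p) a == (edge D p).+1) && (edge (insert_null D p) b == edge D p))
   + ((edge (insert_null D p) a == edge (insert_null D p) b) && (b < a)%R))%N
  = (edge D a == edge D b) && (b < a)%R.
Proof.
move=> ne_ap ne_bp; rewrite !edge_insert_null.
have [lt_pa | lt_ap | eq_pa] := ltgtP p a; last by rewrite eq_pa eqxx in ne_ap.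
all: have [lt_pb | lt_bp | eq_pb] := ltgtP p b; last by rewrite eq_pb eqxx in ne_bp.
- have := leq_edge D (ltW lt_pa); have := leq_edge D (ltW lt_pb).
  by case: (b < a); lia.
- have := leq_edge D (ltW lt_pa); have := leq_edge D (ltW lt_bp).
  by rewrite (lt_trans lt_bp lt_pa); lia.
- have := leq_edge D (ltW lt_ap); have := leq_edge D (ltW lt_pb).
  by rewrite (lt_gtF (lt_trans lt_ap lt_pb)); lia.
- have := leq_edge D (ltW lt_ap); have := leq_edge D (ltW lt_bp).
  by case: (b < a); lia.
Qed.

Theorem mainTheorem2 (D : diagram) (a b p : rat) :
  wf_diagram D ->
  a != b ->
  a \notin cutpts D -> b \notin cutpts D ->
  p \notin cutpts D -> p != a -> p != b ->
  gtilde (insert_null D p) a b = gtilde D a b.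
Proof.
move=> wfD _ _ _ pD ne_pa ne_pb.
have [ne_ap ne_bp] : a != p /\ b != p by rewrite ![_ == p]eq_sym.
rewrite /gtilde Gmx_insert_null // mxE !inordK ?ltnS ?count_size //.
rewrite /insert_null_inv !unbump_edge_insert_null // -!addrA -opprD; congr (_ - _).
have := edge_insert_null_correction D ne_ap ne_bp.
by do 3 case: (_ && _); rewrite //= ?addr0 ?add0r.
Qed.
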